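(* For $j=1,\dots,J$ let $X_j\in\mathbb{R}^{n_j\times m}$ have reduced singular value decomposition $X_j=P_j\Sigma_jQ_j^T$, where $P_j\in\mathbb{R}^{n_j\times r_j}$ and $Q_j\in\mathbb{R}^{m\times r_j}$ have orthonormal columns and $\Sigma_j\in\mathbb{R}^{r_j\times r_j}$ is diagonal with positive diagonal entries. Set $A_j=P_j^T\in\mathbb{R}^{r_j\times n_j}$ and $B_j=-\Sigma_j^{-1}Q_j^T\in\mathbb{R}^{r_j\times m}$, and fix a positive integer $\ell$. Consider the problem $$\min_{W_1,\dots,W_J,Z}\ \sum_{j=1}^J\|W_j\|_1\quad\text{s.t.}\quad A_jW_j+B_jZ=0\ (j=1,\dots,J),\qquad Z^TZ=I_\ell,$$ over $W_j\in\mathbb{R}^{n_j\times\ell}$, $Z\in\mathbb{R}^{m\times\ell}$. Let $(W_1^*,\dots,W_J^*,Z^* )$ be a local minimizer of this problem. Then there exist matrices $\Lambda^*_{1,j}\in\mathbb{R}^{r_j\times\ell}$ ($j=1,\dots,J$) and $\Lambda^*_2\in\mathbb{R}^{\ell\times\ell}$ such that for each $j=1,\dots,J$: $$A_j^T\Lambda^*_{1,j}\in\partial\|W_j^*\|_1,\qquad \sum_{j=1}^J B_j^T\Lambda^*_{1,j}+Z^*\Lambda^*_2=0,\qquad A_jW_j^*+B_jZ^*=0,\qquad (Z^* )^TZ^*=I_\ell.$$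
   Context: For a matrix $W$, $\|W\|_1$ denotes the sum of the $\ell_1$ norms of its columns, i.e. the sum of the absolute values of all its entries. $\partial\|W\|_1$ denotes the (convex) subdifferential of the function $\|\cdot\|_1$ at $W$, with matrices paired via the trace inner product $\langle U,V\rangle=\mathrm{Trace}(U^TV)$. *)

From HB Require Import structures.
From mathcomp Require Import all_boot all_order all_algebra.
From mathcomp Require Import reals.
Set Implicit Arguments. Unset Strict Implicit. Unset Printing Implicit Defensive.
Import Order.TTheory GRing.Theory Num.Theory.
Local Open Scope ring_scope.

Section Defs.
Variable R : realType.

Definition l1norm (p q : nat) (W : 'M[R]_(p, q)) : R :=
  \sum_(i < p) \sum_(k < q) `|W i k|.

Definition subdiff (p q : nat) (f : 'M[R]_(p, q) -> R) (W : 'M[R]_(p, q))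
  (G : 'M[R]_(p, q)) : Prop :=
  forall V : 'M[R]_(p, q), f W + \tr (G^T *m (V - W)) <= f V.

Definition feasible (J m l : nat) (n r : 'I_J -> nat)
  (A : forall j, 'M[R]_(r j, n j)) (B : forall j, 'M[R]_(r j, m))
  (W : forall j, 'M[R]_(n j, l)) (Z : 'M[R]_(m, l)) : Prop :=
  (forall j, A j *m W j + B j *m Z = 0) /\ Z^T *m Z = 1%:M.

Definition objective (J l : nat) (n : 'I_J -> nat)
  (W : forall j, 'M[R]_(n j, l)) : R :=
  \sum_(j < J) l1norm (W j).

(* local minimizer: feasible, and optimal among feasible points in some
   neighbourhood (entrywise distance < eps, equivalent to any norm topology) *)
Definition local_minimizer (J m l : nat) (n r : 'I_J -> nat)
  (A : forall j, 'M[R]_(r j, n j)) (B : forall j, 'M[R]_(r j, m))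
  (Ws : forall j, 'M[R]_(n j, l)) (Zs : 'M[R]_(m, l)) : Prop :=
  feasible A B Ws Zs /\
  exists eps : R, 0 < eps /\
    forall (W : forall j, 'M[R]_(n j, l)) (Z : 'M[R]_(m, l)),
      feasible A B W Z ->
      (forall j i k, `|W j i k - Ws j i k| < eps) ->
      (forall i k, `|Z i k - Zs i k| < eps) ->
      objective Ws <= objective W.

End Defs.

(* At a local minimizer, the one-sided directional derivative of the objective is nonnegative
   along every direction (E, D) that is tangent to the constraints: the Cayley transform of the
   skew matrix D Z^T - Z D^T carries Z along a curve of matrices with orthonormal columns with
   velocity D, and the linear constraints lift this curve to a feasible one with a quadratic
   remainder.  This directional derivative is the maximum of <G, E> over the subgradients G of
   the l1 norm, which form a box parametrized by the entries on the zero set of W.  Minimizing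
   over that box the squared norm of the residual of the multiplier equations, and applying the
   derivative inequality in the direction of minus the residual at the minimizer, shows that
   the minimum is zero; the corresponding subgradient yields the multipliers. *)

From HB Require Import structures.
From mathcomp Require Import all_boot all_order all_algebra.
From mathcomp Require Import reals boolp classical_sets topology normedtype derive.
From mathcomp Require Import ring lra.
Import Order.TTheory GRing.Theory Num.Theory numFieldNormedType.Exports.
Local Open Scope ring_scope.

Set Implicit Arguments. Unset Strict Implicit. Unset Printing Implicit Defensive.

Section Frobenius.
Variable R : realFieldType.

Definition mxdot (p q : nat) (A B : 'M[R]_(p, q)) : R := \tr (A^T *m B).

Section Basic.
Variables p q : nat.
Implicit Types A B C : 'M[R]_(p, q).

Lemma mxdotE A B : mxdot A B = \sum_i \sum_k A i k * B i k.
Proof.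
rewrite /mxdot /mxtrace exchange_big; apply: eq_bigr => k _.
by rewrite mxE; apply: eq_bigr => i _; rewrite mxE.
Qed.

Lemma mxdotC A B : mxdot A B = mxdot B A.
Proof. by rewrite /mxdot -mxtrace_tr trmx_mul trmxK. Qed.

Lemma mxdotDl A B C : mxdot (A + B) C = mxdot A C + mxdot B C.
Proof. by rewrite /mxdot linearD mulmxDl mxtraceD. Qed.

Lemma mxdotDr A B C : mxdot A (B + C) = mxdot A B + mxdot A C.
Proof. by rewrite /mxdot mulmxDr mxtraceD. Qed.

Lemma mxdotBr A B C : mxdot A (B - C) = mxdot A B - mxdot A C.
Proof. by rewrite /mxdot mulmxBr mxtraceD raddfN. Qed.

Lemma mxdotNr A B : mxdot A (- B) = - mxdot A B.
Proof. by rewrite /mxdot mulmxN raddfN. Qed.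

Lemma mxdotZl a A B : mxdot (a *: A) B = a * mxdot A B.
Proof. by rewrite /mxdot linearZ -scalemxAl mxtraceZ. Qed.

Lemma mxdot_suml (I : Type) (r : seq I) (P : pred I) (F : I -> 'M[R]_(p, q)) B :
  mxdot (\sum_(i <- r | P i) F i) B = \sum_(i <- r | P i) mxdot (F i) B.
Proof. by rewrite /mxdot raddf_sum mulmx_suml raddf_sum. Qed.

Lemma mxdot_ge0 A : 0 <= mxdot A A.
Proof.
by rewrite mxdotE sumr_ge0 // => i _; rewrite sumr_ge0 // => k _; rewrite -expr2 sqr_ge0.
Qed.

Lemma sqr_le_mxdot A i k : A i k ^+ 2 <= mxdot A A.
Proof.
rewrite mxdotE (bigD1 i) //= (bigD1 k) //= -expr2 -addrA lerDl addr_ge0 //.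
  by rewrite sumr_ge0 // => k' _; rewrite -expr2 sqr_ge0.
by rewrite sumr_ge0 // => i' _; rewrite sumr_ge0 // => k' _; rewrite -expr2 sqr_ge0.
Qed.

Lemma mxdot_eq0 A : (mxdot A A == 0) = (A == 0).
Proof.
apply/eqP/eqP => [AA0|->]; last by rewrite /mxdot mulmx0 mxtrace0.
apply/matrixP => i k; rewrite mxE; apply/eqP; rewrite -sqrf_eq0 eq_le sqr_ge0 andbT.
by rewrite -AA0 sqr_le_mxdot.
Qed.

Lemma mxdot_le A B : 2 * mxdot A B <= mxdot A A + mxdot B B.
Proof.
rewrite !mxdotE -big_split mulr_sumr /=; apply: ler_sum => i _.
rewrite -big_split mulr_sumr /=; apply: ler_sum => k _.
have := sqr_ge0 (A i k - B i k); rewrite sqrrB -!expr2; lra.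
Qed.

End Basic.

Lemma mxdot_mull (p q s : nat) (M : 'M[R]_(p, q)) (A : 'M[R]_(q, s)) B :
  mxdot (M *m A) B = mxdot A (M^T *m B).
Proof. by rewrite /mxdot trmx_mul mulmxA. Qed.

Lemma mxdot_skew (n p : nat) (S : 'M[R]_n) (V : 'M[R]_(n, p)) :
  S^T = - S -> mxdot V (S *m V) = 0.
Proof.
move=> skewS; apply/eqP; rewrite -eqNr; apply/eqP.
by rewrite {2}mxdotC mxdot_mull skewS mulNmx /mxdot mulmxN linearN.
Qed.

End Frobenius.

Section Cayley.
Variables (R : realFieldType) (n : nat).
Implicit Types S : 'M[R]_n.

Lemma skew_unitmx S : S^T = - S -> 1%:M - S \in unitmx.
Proof.
move=> skewS; rewrite -row_free_unit -kermx_eq0; apply/eqP.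
set K := kermx (1%:M - S).
have KS : K *m S = K.
  by apply/eqP; rewrite eq_sym -subr_eq0 -{1}(mulmx1 K) -mulmxBr mulmx_ker.
have skewST : S^T^T = - S^T by rewrite trmxK skewS opprK.
apply: trmx_inj; rewrite trmx0; apply/eqP; rewrite -mxdot_eq0.
by rewrite -{2}KS [(K *m S)^T]trmx_mul mxdot_skew.
Qed.

Definition cayley S := 2%:R *: invmx (1%:M - S) - 1%:M.

Lemma cayleyE S : 1%:M - S \in unitmx ->
  cayley S = 1%:M + 2%:R *: S + 2%:R *: (invmx (1%:M - S) *m (S *m S)).
Proof.
move=> unitS; set Y := invmx (1%:M - S).
have YE : Y = 1%:M + S + Y *m (S *m S).
  have : Y *m (1%:M - S *m S) = 1%:M + S.
    have -> : 1%:M - S *m S = (1%:M - S) *m (1%:M + S).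
      by rewrite mulmxDr mulmx1 mulmxBl mul1mx addrA subrK.
    by rewrite mulmxA mulVmx // mul1mx.
  by rewrite mulmxBr mulmx1 => <-; rewrite subrK.
rewrite /cayley -/Y {1}YE !scalerDr; apply/matrixP => i j; rewrite !mxE; lra.
Qed.

Lemma cayley_orthogonal S : S^T = - S -> (cayley S)^T *m cayley S = 1%:M.
Proof.
move=> skewS; have unitS := skew_unitmx skewS.
set B := 1%:M - S; set Y := invmx B.
have BY : B *m Y = 1%:M by rewrite mulmxV.
have BT : B^T = 2%:R *: 1%:M - B.
  apply/matrixP => i j; have := congr1 (fun M : 'M[R]_n => M i j) skewS.
  by rewrite !mxE eq_sym; lra.
have YtBt : Y^T *m B^T = 1%:M by rewrite -trmx_mul BY trmx1.
have YtY : Y^T + Y = 2%:R *: (Y^T *m Y).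
  have <- : Y^T *m (B + B^T) *m Y = Y^T + Y.
    by rewrite mulmxDr mulmxDl -mulmxA BY mulmx1 YtBt mul1mx.
  by rewrite BT addrC subrK -scalemxAr mulmx1 scalemxAl.
rewrite /cayley -/Y [(_ - _)^T]linearB /= [(_ *: _)^T]linearZ /= trmx1.
rewrite mulmxBl !mulmxBr !mulmx1 !mul1mx.
rewrite -!scalemxAl -!scalemxAr scalerA.
have -> : (2%:R * 2%:R : R) *: (Y^T *m Y) = 2%:R *: (Y^T + Y) by rewrite YtY scalerA.
rewrite scalerDr; apply/matrixP => i j; rewrite !mxE; lra.
Qed.

Lemma mxdot_invmx_skew_le (p : nat) S (X : 'M[R]_(n, p)) : S^T = - S ->
  mxdot (invmx (1%:M - S) *m X) (invmx (1%:M - S) *m X) <= mxdot X X.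
Proof.
move=> skewS; set V := invmx (1%:M - S) *m X.
have BV : (1%:M - S) *m V = X by rewrite /V mulmxA mulmxV ?skew_unitmx // mul1mx.
have VX : mxdot V X = mxdot V V.
  by rewrite -BV mulmxBl mul1mx mxdotBr mxdot_skew // subr0.
have := mxdot_le V X; rewrite VX; lra.
Qed.

End Cayley.

(* The curve is the Cayley transform of the skew matrix [t/2 (D Z^T - Z D^T)]
   applied to [Z]; it equals [Z + t D + O(t^2)]. *)
Lemma stiefel_curve (R : realFieldType) (m l : nat) (Z D : 'M[R]_(m, l)) :
  Z^T *m Z = 1%:M -> Z^T *m D = 0 ->
  exists c : R, forall t : R, exists2 V : 'M[R]_(m, l), mxdot V V <= c &
    (Z + t *: D + t ^+ 2 *: V)^T *m (Z + t *: D + t ^+ 2 *: V) = 1%:M.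
Proof.
move=> ZZ ZD; set O := D *m Z^T - Z *m D^T.
have skewO : O^T = - O by rewrite /O [(_ - _)^T]linearB /= !trmx_mul !trmxK opprB.
have OZ : O *m Z = D.
  have DZ : D^T *m Z = 0 by rewrite -(trmxK Z) -trmx_mul ZD trmx0.
  by rewrite /O mulmxBl -!mulmxA ZZ DZ mulmx1 mulmx0 subr0.
set X := O *m (O *m Z); exists (mxdot X X) => t.
set S := (t / 2) *: O.
have skewS : S^T = - S by rewrite /S [(_ *: _)^T]linearZ /= skewO scalerN.
set Y := invmx (1%:M - S).
exists (2^-1 *: (Y *m X)).
  rewrite mxdotZl mxdotC mxdotZl mulrA; apply: le_trans (mxdot_invmx_skew_le X skewS).
  by apply: ler_piMl; [exact: mxdot_ge0 | lra].
have -> : Z + t *: D + t ^+ 2 *: (2^-1 *: (Y *m X)) = cayley S *m Z.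
  have SZ : S *m Z = (t / 2) *: D by rewrite /S -scalemxAl OZ.
  have SSZ : S *m S *m Z = (t / 2 * (t / 2)) *: X.
    by rewrite -mulmxA SZ -scalemxAr /S -scalemxAl -OZ scalerA.
  rewrite cayleyE ?skew_unitmx // !mulmxDl mul1mx -/Y -(scalemxAl 2%:R S) SZ.
  rewrite -(scalemxAl 2%:R (Y *m _)) -mulmxA SSZ.
  by rewrite -scalemxAr !scalerA; congr (_ + _ *: _ + _ *: _); field.
by rewrite trmx_mul mulmxA -(mulmxA Z^T) cayley_orthogonal // mulmx1.
Qed.

Lemma ler_sum_term (R : numDomainType) (I : finType) (F : I -> R) i :
  (forall j, 0 <= F j) -> F i <= \sum_j F j.
Proof. by move=> F_ge0; rewrite (bigD1 i) //= lerDl sumr_ge0. Qed.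

Section Quadratic.
Variable R : realFieldType.
Implicit Types a b d eps t : R.

Lemma quadratic_lt_near0 a b eps : 0 <= a -> 0 <= b -> 0 < eps ->
  exists2 d, 0 < d & forall t, 0 < t <= d -> t * a + t ^+ 2 * b < eps.
Proof.
move=> a0 b0 eps0; have s0 : 0 < eps + a + b by lra.
exists (eps / (eps + a + b)); first exact: divr_gt0.
move=> t /andP[t0 td].
have t1 : t <= 1 by apply: le_trans td _; rewrite ler_pdivrMr // mul1r; lra.
have tab : t * (a + b) < eps.
  apply: le_lt_trans (_ : eps / (eps + a + b) * (a + b) < eps).
    by rewrite ler_wpM2r //; lra.
  by rewrite mulrAC ltr_pdivrMr // ltr_pM2l //; lra.
have : t ^+ 2 * b <= t * b by rewrite expr2 ler_wpM2r // ger_pMr.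
lra.
Qed.

Lemma linear_coef_ge0 a b d : 0 < d ->
  (forall t, 0 < t <= d -> 0 <= t * a + t ^+ 2 * b) -> 0 <= a.
Proof.
move=> d0 hd; rewrite leNgt; apply/negP => a0.
have na_gt0 : 0 < - a by lra.
have [e e0 he] := quadratic_lt_near0 (normr_ge0 b) (lexx 0) na_gt0.
set t := Num.min d e.
have t0 : 0 < t by rewrite lt_min d0 e0.
have := he t; rewrite ge_min lexx orbT andbT mulr0 addr0 => /(_ t0) tb.
have := hd t; rewrite ge_min lexx t0 /= => /(_ isT).
have : t ^+ 2 * b <= t ^+ 2 * `|b| by rewrite ler_wpM2l ?sqr_ge0 ?ler_norm.
have : t * (t * `|b|) < t * - a by rewrite ltr_pM2l //.
rewrite mulrA -expr2; lra.
Qed.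

End Quadratic.

Section L1norm.
Variable R : realType.

(* [dabs w e] is the one-sided derivative of [`|.|] at [w] in the direction [e], so that
   [dl1norm W E] is the maximum of [mxdot G E] over the subgradients [G] of [l1norm] at [W]. *)
Definition dabs (w e : R) : R := if w == 0 then `|e| else Num.sg w * e.

Definition dl1norm (p q : nat) (W E : 'M[R]_(p, q)) : R :=
  \sum_i \sum_k dabs (W i k) (E i k).

(* The quadratic term vanishes at [w = 0], where [`|w|^-1 = 0]. *)
Lemma normrD_le_dabs (w x : R) : `|w + x| <= `|w| + dabs w x + 2 * x ^+ 2 / `|w|.
Proof.
rewrite /dabs; have [->|w0] := eqVneq w 0.
  by rewrite add0r normr0 invr0 mulr0 addr0 add0r.
have w_gt0 : 0 < `|w| by rewrite normr_gt0.
have rem_ge0 : 0 <= 2 * x ^+ 2 / `|w| by rewrite divr_ge0 // mulr_ge0 // sqr_ge0.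
have [xw|wx] := ltP `|x| `|w|.
  move: xw; rewrite ltr_norml => /andP[xl xr].
  case: (ltgtP w 0) => [wn|wp|/eqP]; last by rewrite (negbTE w0).
  - rewrite ltr0_sg // ltr0_norm // in xl xr rem_ge0 *; rewrite ler0_norm; lra.
  - rewrite gtr0_sg // gtr0_norm // in xl xr rem_ge0 *; rewrite ger0_norm; lra.
have sgx : - `|x| <= Num.sg w * x.
  by apply: lerNnormlW; rewrite normrM normr_sg w0 mul1r.
have : `|x| * `|w| <= x ^+ 2 by rewrite -real_normK ?num_real // expr2 ler_wpM2l.
rewrite -(ler_pdivlMr _ _ w_gt0) => xx.
have := ler_normD w x; lra.
Qed.

Lemma dabsZ (w e t : R) : 0 <= t -> dabs w (t * e) = t * dabs w e.
Proof. by move=> t0; rewrite /dabs normrM ger0_norm // mulrCA; case: ifP. Qed.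

Section Entrywise.
Variables p q : nat.
Implicit Types A B W E U : 'M[R]_(p, q).

Lemma l1norm_ge0 A : 0 <= l1norm A.
Proof. by rewrite sumr_ge0 // => i _; rewrite sumr_ge0. Qed.

Lemma normr_le_l1norm A i k : `|A i k| <= l1norm A.
Proof.
rewrite /l1norm; apply: le_trans (@ler_sum_term R _ (fun i => \sum_k `|A i k|) i _) => [|i'].
  exact: (@ler_sum_term R _ (fun k => `|A i k|) k).
by rewrite sumr_ge0.
Qed.

Lemma l1normD A B : l1norm (A + B) <= l1norm A + l1norm B.
Proof.
rewrite /l1norm -big_split /=; apply: ler_sum => i _.
by rewrite -big_split /=; apply: ler_sum => k _; rewrite mxE ler_normD.
Qed.

Lemma l1normZ a A : l1norm (a *: A) = `|a| * l1norm A.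
Proof.
rewrite /l1norm mulr_sumr; apply: eq_bigr => i _.
by rewrite mulr_sumr; apply: eq_bigr => k _; rewrite mxE normrM.
Qed.

Lemma normr_dev_le W E U t i k : 0 <= t ->
  `|(W + t *: E + t ^+ 2 *: U) i k - W i k| <= t * l1norm E + t ^+ 2 * l1norm U.
Proof.
move=> t0; have -> : (W + t *: E + t ^+ 2 *: U) i k - W i k = (t *: E + t ^+ 2 *: U) i k.
  by rewrite !mxE; ring.
apply: le_trans (normr_le_l1norm _ i k) _; apply: le_trans (l1normD _ _) _.
by rewrite !l1normZ !ger0_norm ?sqr_ge0.
Qed.

Lemma l1norm_le_mxdot A : l1norm A <= (p * q)%:R + mxdot A A.
Proof.
have -> : (p * q)%:R = \sum_(i < p) \sum_(k < q) (1 : R).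
  by rewrite !sumr_const !card_ord -mulrnA mulnC.
rewrite mxdotE -big_split /=; apply: ler_sum => i _.
rewrite -big_split /=; apply: ler_sum => k _.
have := sqr_ge0 (`|A i k| - 1); rewrite sqrrB real_normK ?num_real // -expr2.
have := normr_ge0 (A i k); lra.
Qed.

Lemma l1norm_expansion W E U t : 0 <= t ->
  l1norm (W + t *: E + t ^+ 2 *: U) <= l1norm W + t * dl1norm W E
    + t ^+ 2 * (\sum_i \sum_k 2 * E i k ^+ 2 / `|W i k| + l1norm U).
Proof.
move=> t0; apply: le_trans (l1normD _ _) _.
rewrite l1normZ ger0_norm ?sqr_ge0 // mulrDr addrA lerD2r.
rewrite /l1norm /dl1norm !mulr_sumr -!big_split /=; apply: ler_sum => i _.
rewrite !mulr_sumr -!big_split /=; apply: ler_sum => k _.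
have -> : t ^+ 2 * (2 * E i k ^+ 2 / `|W i k|) = 2 * (t * E i k) ^+ 2 / `|W i k|.
  by rewrite exprMn; ring.
by rewrite !mxE -dabsZ // normrD_le_dabs.
Qed.

End Entrywise.

Lemma l1norm_mulmx_le (p q s : nat) (A : 'M[R]_(p, q)) (B : 'M[R]_(q, s)) :
  l1norm (A *m B) <= l1norm A * l1norm B.
Proof.
rewrite /l1norm mulr_suml; apply: ler_sum => i _.
apply: (@le_trans _ _ (\sum_k \sum_a `|A i a| * `|B a k|)).
  apply: ler_sum => k _; rewrite mxE; apply: le_trans (ler_norm_sum _ _ _) _.
  by apply: ler_sum => a _; rewrite normrM.
rewrite exchange_big mulr_suml /=; apply: ler_sum => a _.
rewrite -mulr_sumr ler_wpM2l // (@ler_sum_term R _ (fun a => \sum_k `|B a k|)) //.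
by move=> a'; rewrite sumr_ge0.
Qed.

End L1norm.

Section Descent.
Variables (R : realType) (J m l : nat) (n r : 'I_J -> nat).
Variables (A : forall j, 'M[R]_(r j, n j)) (B : forall j, 'M[R]_(r j, m)).
Hypothesis A_coisometry : forall j, A j *m (A j)^T = 1%:M.

(* The curve of [stiefel_curve] through [Zs] is lifted to the [W]-variables
   by the right inverse [(A j)^T] of [A j]. *)
Lemma feasible_curve (Ws : forall j, 'M[R]_(n j, l)) (Zs D : 'M[R]_(m, l))
    (E : forall j, 'M[R]_(n j, l)) :
  feasible A B Ws Zs -> Zs^T *m D = 0 -> (forall j, A j *m E j + B j *m D = 0) ->
  exists c : R, forall t : R, exists (U : forall j, 'M[R]_(n j, l)) (V : 'M[R]_(m, l)),
    [/\ feasible A B (fun j => Ws j + t *: E j + t ^+ 2 *: U j) (Zs + t *: D + t ^+ 2 *: V),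
        forall j, l1norm (U j) <= c & l1norm V <= c].
Proof.
move=> [feasWZ ZZ] ZD tangentE; have [c Vbound] := stiefel_curve ZZ ZD.
set cV := (m * l)%:R + c; set cA := \sum_j l1norm ((A j)^T *m - B j).
have cA_ge0 : 0 <= cA by rewrite sumr_ge0 // => j _; exact: l1norm_ge0.
exists (cV * (1 + cA)) => t; have [V VV orthV] := Vbound t.
have V_le : l1norm V <= cV by apply: le_trans (l1norm_le_mxdot V) _; rewrite lerD2l.
have cV_ge0 : 0 <= cV := le_trans (l1norm_ge0 V) V_le.
exists (fun j => (A j)^T *m - B j *m V), V; split=> //.
- split=> // j; rewrite !mulmxDr -!scalemxAr addrACA (addrACA (A j *m Ws j)).
  rewrite feasWZ -!scalerDr tangentE !mulmxA A_coisometry mul1mx mulNmx addNr.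
  by rewrite !scaler0 !addr0.
- move=> j; apply: le_trans (l1norm_mulmx_le _ _) _; rewrite mulrC.
  apply: ler_pM; rewrite ?l1norm_ge0 //.
  apply: le_trans (_ : cA <= 1 + cA); last by rewrite lerDr.
  by apply: (@ler_sum_term R _ (fun j => l1norm ((A j)^T *m - B j))) => j'; exact: l1norm_ge0.
- by apply: le_trans V_le _; rewrite ler_peMr // lerDl.
Qed.

Lemma local_minimizer_dl1norm_ge0 (Ws : forall j, 'M[R]_(n j, l)) (Zs D : 'M[R]_(m, l))
    (E : forall j, 'M[R]_(n j, l)) :
  local_minimizer A B Ws Zs -> Zs^T *m D = 0 -> (forall j, A j *m E j + B j *m D = 0) ->
  0 <= \sum_j dl1norm (Ws j) (E j).
Proof.
move=> [feasWZ [eps [eps_gt0 minWZ]]] ZD tangentE.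
have [c curve] := feasible_curve feasWZ ZD tangentE.
have c_ge0 : 0 <= c by have [_ [V [_ _ /(le_trans (l1norm_ge0 V))]]] := curve 0.
set a := l1norm D + \sum_j l1norm (E j).
have E_le j : l1norm (E j) <= a.
  apply: le_trans (_ : \sum_j l1norm (E j) <= a); last by rewrite lerDr l1norm_ge0.
  by apply: (@ler_sum_term R _ (fun j => l1norm (E j))) => j'; exact: l1norm_ge0.
have D_le : l1norm D <= a by rewrite lerDl sumr_ge0 // => j _; exact: l1norm_ge0.
have a_ge0 : 0 <= a := le_trans (l1norm_ge0 D) D_le.
have [d d_gt0 small] := quadratic_lt_near0 a_ge0 c_ge0 eps_gt0.
set rho := \sum_j (\sum_i \sum_k 2 * E j i k ^+ 2 / `|Ws j i k| + c).
apply: (@linear_coef_ge0 _ _ rho _ d_gt0) => t /andP[t_gt0 t_le].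
have t_ge0 := ltW t_gt0.
have [U [V [feasUV U_le V_le]]] := curve t.
have dev_lt (p q : nat) (M X Y : 'M[R]_(p, q)) i k : l1norm X <= a -> l1norm Y <= c ->
    `|(M + t *: X + t ^+ 2 *: Y) i k - M i k| < eps.
  move=> Xa Yc; apply: le_lt_trans (normr_dev_le _ _ _ _ _ t_ge0) _.
  apply: le_lt_trans (small t _); last by rewrite t_gt0.
  by apply: lerD; rewrite ler_wpM2l ?sqr_ge0.
have := minWZ _ _ feasUV (fun j i k => dev_lt _ _ _ _ _ i k (E_le j) (U_le j))
  (fun i k => dev_lt _ _ _ _ _ i k D_le V_le).
rewrite /objective => min_le.
suff : \sum_j l1norm (Ws j + t *: E j + t ^+ 2 *: U j) <=
  \sum_j l1norm (Ws j) + t * \sum_j dl1norm (Ws j) (E j) + t ^+ 2 * rho by lra.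
rewrite !mulr_sumr -!big_split /=; apply: ler_sum => j _.
apply: le_trans (l1norm_expansion _ _ _ t_ge0) _.
by rewrite lerD2l ler_wpM2l ?sqr_ge0 // lerD2l.
Qed.

End Descent.

Section Subgradient.
Variables (R : realType) (p q : nat).
Implicit Types W X Y E : 'M[R]_(p, q).

Definition l1subgrad W X : 'M[R]_(p, q) :=
  \matrix_(i, k) if W i k == 0 then X i k else Num.sg (W i k).

Lemma subdiff_l1norm W X : (forall i k, `|X i k| <= 1) ->
  subdiff (@l1norm R p q) W (l1subgrad W X).
Proof.
move=> X_le V; change (l1norm W + mxdot (l1subgrad W X) (V - W) <= l1norm V).
rewrite mxdotE -big_split /=; apply: ler_sum => i _.
rewrite -big_split /=; apply: ler_sum => k _; rewrite !mxE.
case: eqP => [->|/eqP W0].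
  rewrite normr0 add0r subr0; apply: le_trans (ler_norm _) _.
  by rewrite normrM ler_piMl.
rewrite mulrBr -normrEsg addrC subrK; apply: le_trans (ler_norm _) _.
by rewrite normrM normr_sg W0 mul1r.
Qed.

Lemma mxdot_l1subgrad_sg W E : mxdot (l1subgrad W (map_mx Num.sg E)) E = dl1norm W E.
Proof.
rewrite mxdotE; apply: eq_bigr => i _; apply: eq_bigr => k _.
by rewrite !mxE /dabs; case: eqP => // _; rewrite normrEsg.
Qed.

Lemma l1subgrad_comb W X Y t :
  l1subgrad W ((1 - t) *: X + t *: Y) = (1 - t) *: l1subgrad W X + t *: l1subgrad W Y.
Proof.
by apply/matrixP => i k; rewrite !mxE; case: eqP => // _; rewrite -mulrDl subrK mul1r.
Qed.

End Subgradient.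

Section ContinuousEntries.
Variables (R : realType) (T : topologicalType).

Definition continuous_entries (p q : nat) (f : T -> 'M[R]_(p, q)) :=
  forall i k, continuous (fun x => f x i k).

Lemma continuous_sum (I : Type) (r : seq I) (P : pred I) (F : I -> T -> R) :
  (forall i, continuous (F i)) -> continuous (fun x => \sum_(i <- r | P i) F i x).
Proof.
by move=> F_cont; apply: continuous_big => [|i _]; [exact: add_continuous|exact: F_cont].
Qed.

Lemma continuous_entries_mull (p q s : nat) (M : 'M[R]_(p, q)) (f : T -> 'M[R]_(q, s)) :
  continuous_entries f -> continuous_entries (fun x => M *m f x).
Proof.
move=> f_cont i k; under eq_fun do rewrite mxE.
apply: continuous_sum => a x; apply: continuousM; [exact: cst_continuous|exact: f_cont].
Qed.

Lemma continuous_entries_sum (I : Type) (r : seq I) (p q : nat) (f : I -> T -> 'M[R]_(p, q)) :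
  (forall a, continuous_entries (f a)) -> continuous_entries (fun x => \sum_(a <- r) f a x).
Proof.
by move=> f_cont i k; under eq_fun do rewrite summxE; apply: continuous_sum => a; exact: f_cont.
Qed.

Lemma continuous_mxdot (p q : nat) (f g : T -> 'M[R]_(p, q)) :
  continuous_entries f -> continuous_entries g -> continuous (fun x => mxdot (f x) (g x)).
Proof.
move=> f_cont g_cont; under eq_fun do rewrite mxdotE.
apply: continuous_sum => i; apply: continuous_sum => k x.
by apply: continuousM; [exact: f_cont|exact: g_cont].
Qed.

End ContinuousEntries.

Section Box.
Variables (R : realType) (N : nat).

Definition box : set 'rV[R]_N := [set x | forall i, `|x 0 i| <= 1]%classic.

Lemma compact_box : compact box.
Proof.
have -> : box = [set x : 'rV[R]_N | forall i, `[(-1 : R), 1] (x ord0 i)]%classic.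
  by apply/seteqP; split=> x x_box i; have := x_box i; rewrite /= in_itv /= ler_norml.
by apply: (@rV_compact _ _ (fun _ => `[(-1 : R), 1]%classic)) => _; exact: segment_compact.
Qed.

Lemma box0 : box 0.
Proof. by move=> i; rewrite mxE normr0. Qed.

Lemma box_comb x y t : box x -> box y -> 0 <= t <= 1 -> box ((1 - t) *: x + t *: y).
Proof.
move=> x_box y_box /andP[t0 t1] i; have t1' : 0 <= 1 - t by rewrite subr_ge0.
rewrite !mxE; apply: le_trans (ler_normD _ _) _.
rewrite !normrM (ger0_norm t0) (ger0_norm t1').
have := ler_wpM2l t0 (y_box i); have := ler_wpM2l t1' (x_box i); lra.
Qed.

End Box.

Arguments box {R N}.

Lemma quadratic_min_le (R : realFieldType) (V : lmodType R) (q : V -> V -> R) (x y : V) :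
  (forall x y, q x y = q y x) ->
  (forall t x x' y, q ((1 - t) *: x + t *: x') y = (1 - t) * q x y + t * q x' y) ->
  (forall t, 0 < t <= 1 -> q y y <= q ((1 - t) *: y + t *: x) ((1 - t) *: y + t *: x)) ->
  q y y <= q x y.
Proof.
move=> qC q_comb y_min; rewrite -subr_ge0.
suff /linear_coef_ge0 : forall t, 0 < t <= 1 ->
    0 <= t * (2 * (q x y - q y y)) + t ^+ 2 * (q y y - 2 * q x y + q x x).
  by move/(_ ltr01); rewrite pmulr_rge0.
move=> t /y_min; set z := (1 - t) *: y + t *: x.
have qyz : q y z = (1 - t) * q y y + t * q x y by rewrite qC q_comb.
have qxz : q x z = (1 - t) * q x y + t * q x x by rewrite qC q_comb (qC y).
rewrite {1}/z q_comb qyz qxz.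
have -> : t * (2 * (q x y - q y y)) + t ^+ 2 * (q y y - 2 * q x y + q x x) =
    (1 - t) * ((1 - t) * q y y + t * q x y) + t * ((1 - t) * q x y + t * q x x) - q y y.
  by ring.
by rewrite subr_ge0.
Qed.

Section Multipliers.
Variables (R : realType) (J m l : nat) (n r : 'I_J -> nat).
Variables (A : forall j, 'M[R]_(r j, n j)) (B : forall j, 'M[R]_(r j, m)).
Variables (Ws : forall j, 'M[R]_(n j, l)) (Zs : 'M[R]_(m, l)).
Hypothesis A_coisometry : forall j, A j *m (A j)^T = 1%:M.
Hypothesis Zs_orthonormal : Zs^T *m Zs = 1%:M.

Local Notation I := {j : 'I_J & ('I_(n j) * 'I_l)%type}.
Local Notation N := #|{: I}|.

Definition mxs_of_rV (x : 'rV[R]_N) j : 'M[R]_(n j, l) :=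
  \matrix_(i, k) x 0 (enum_rank (Tagged (fun j => ('I_(n j) * 'I_l)%type) (i, k) : I)).

Definition rV_of_mxs (X : forall j, 'M[R]_(n j, l)) : 'rV[R]_N :=
  \row_a let t := enum_val a in X (tag t) (tagged t).1 (tagged t).2.

Lemma rV_of_mxsK X j : mxs_of_rV (rV_of_mxs X) j = X j.
Proof. by apply/matrixP => i k; rewrite !mxE enum_rankK. Qed.

Definition subgrad x j := l1subgrad (Ws j) (mxs_of_rV x j).

Definition kerA j := 1%:M - (A j)^T *m A j.

Definition kerZ := 1%:M - Zs *m Zs^T.

Definition dual_sum x := \sum_j (B j)^T *m (A j *m subgrad x j).

(* [defect x x = 0] says exactly that [subgrad x] satisfies the multiplier equations. *)
Definition defect x y := \sum_j mxdot (kerA j *m subgrad x j) (kerA j *m subgrad y j)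
  + mxdot (kerZ *m dual_sum x) (kerZ *m dual_sum y).

Lemma defectC x y : defect x y = defect y x.
Proof.
by rewrite /defect mxdotC; congr (_ + _); apply: eq_bigr => j _; rewrite mxdotC.
Qed.

Lemma defect_comb t x x' y :
  defect ((1 - t) *: x + t *: x') y = (1 - t) * defect x y + t * defect x' y.
Proof.
have subgrad_comb j :
    subgrad ((1 - t) *: x + t *: x') j = (1 - t) *: subgrad x j + t *: subgrad x' j.
  rewrite /subgrad -l1subgrad_comb; congr l1subgrad.
  by apply/matrixP => i k; rewrite !mxE.
have dual_sum_comb : dual_sum ((1 - t) *: x + t *: x') = (1 - t) *: dual_sum x + t *: dual_sum x'.
  rewrite /dual_sum !scaler_sumr -big_split; apply: eq_bigr => j _ /=.
  by rewrite subgrad_comb !mulmxDr -!scalemxAr.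
rewrite /defect dual_sum_comb mulmxDr -!scalemxAr mxdotDl !mxdotZl.
rewrite !mulrDr addrACA; congr (_ + _).
rewrite !mulr_sumr -big_split /=; apply: eq_bigr => j _.
by rewrite subgrad_comb mulmxDr -!scalemxAr mxdotDl !mxdotZl.
Qed.

Lemma defect_ge0 x : 0 <= defect x x.
Proof. by rewrite addr_ge0 ?mxdot_ge0 // sumr_ge0 // => j _; exact: mxdot_ge0. Qed.

Lemma continuous_defect : continuous (fun x => defect x x).
Proof.
have subgrad_cont j : continuous_entries (subgrad ^~ j).
  move=> i k; have -> : (fun x => subgrad x j i k) = fun x =>
      if Ws j i k == 0 then x 0 (enum_rank (Tagged (fun j => ('I_(n j) * 'I_l)%type) (i, k) : I))
      else Num.sg (Ws j i k).
    by apply: funext => x; rewrite !mxE.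
  by case: eqP => _; [exact: coord_continuous|exact: cst_continuous].
have dual_sum_cont : continuous_entries dual_sum.
  apply: continuous_entries_sum => j; do 2!apply: continuous_entries_mull.
  exact: subgrad_cont.
move=> x; apply: (@continuousD _ R^o _
  (fun x => \sum_j mxdot (kerA j *m subgrad x j) (kerA j *m subgrad x j))
  (fun x => mxdot (kerZ *m dual_sum x) (kerZ *m dual_sum x))).
  by apply: continuous_sum => j; apply: continuous_mxdot;
    apply: continuous_entries_mull; exact: subgrad_cont.
by apply: continuous_mxdot; exact: continuous_entries_mull.
Qed.

(* The direction [(- dW, D)] is minus the gradient of [defect] at [y]; it is tangent
   to the constraints. *)
Lemma defect_descent :
  (forall D E, Zs^T *m D = 0 -> (forall j, A j *m E j + B j *m D = 0) ->
     0 <= \sum_j dl1norm (Ws j) (E j)) ->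
  forall y, exists2 x, box x & defect x y <= 0.
Proof.
move=> dl1norm_ge0 y; set D := kerZ^T *m (kerZ *m dual_sum y).
pose dW j := (kerA j)^T *m (kerA j *m subgrad y j) + (A j)^T *m (B j *m D).
have ZD : Zs^T *m D = 0.
  have kerZ_Zs : kerZ *m Zs = 0.
    by rewrite /kerZ mulmxBl mul1mx -mulmxA Zs_orthonormal mulmx1 subrr.
  by rewrite /D !mulmxA -trmx_mul kerZ_Zs trmx0 !mul0mx.
have tangent j : A j *m (- dW j) + B j *m D = 0.
  have AkerA : A j *m (kerA j)^T = 0.
    rewrite /kerA [(_ - _)^T]linearB /= trmx_mul trmxK tr_scalar_mx.
    by rewrite mulmxBr mulmx1 mulmxA A_coisometry mul1mx subrr.
  by rewrite mulmxN mulmxDr !mulmxA AkerA !mul0mx add0r A_coisometry mul1mx addNr.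
have defectE x : defect x y = \sum_j mxdot (subgrad x j) (dW j).
  rewrite /defect mxdot_mull -/D /dual_sum mxdot_suml -big_split /=.
  apply: eq_bigr => j _; rewrite !mxdot_mull trmxK -mxdot_mull.
  by rewrite /dW mxdot_mull mxdotDr.
exists (rV_of_mxs (fun j => map_mx Num.sg (- dW j))).
  by move=> a; rewrite /rV_of_mxs !mxE normr_sg; case: (_ != 0).
rewrite defectE -oppr_ge0 -sumrN; apply: le_trans (dl1norm_ge0 D _ ZD tangent) _.
apply: ler_sum => j _.
by rewrite /subgrad rV_of_mxsK -mxdotNr mxdot_l1subgrad_sg.
Qed.

Lemma multipliers_of_defect0 x : box x -> defect x x = 0 ->
  exists (L1 : forall j, 'M[R]_(r j, l)) (L2 : 'M[R]_l),
    (forall j, subdiff (@l1norm R (n j) l) (Ws j) ((A j)^T *m L1 j)) /\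
    \sum_j (B j)^T *m L1 j + Zs *m L2 = 0.
Proof.
move=> x_box /eqP; rewrite paddr_eq0 ?mxdot_ge0 ?sumr_ge0 // => [|j _]; last exact: mxdot_ge0.
case/andP=> /eqP kerA0 /eqP kerZ0.
have kerA_subgrad j : kerA j *m subgrad x j = 0.
  apply/eqP; rewrite -mxdot_eq0; apply/eqP.
  by apply: (psumr_eq0P _ kerA0) => // j' _; exact: mxdot_ge0.
exists (fun j => A j *m subgrad x j), (- (Zs^T *m dual_sum x)); split.
  move=> j; have := kerA_subgrad j; rewrite /kerA mulmxBl mul1mx mulmxA => /eqP.
  rewrite subr_eq0 => /eqP <-; apply: subdiff_l1norm => i k.
  by rewrite mxE; exact: x_box.
move/eqP: kerZ0; rewrite mxdot_eq0 => /eqP.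
by rewrite /kerZ mulmxBl mul1mx mulmxN mulmxA.
Qed.

Lemma multipliers_of_dl1norm_ge0 :
  (forall D E, Zs^T *m D = 0 -> (forall j, A j *m E j + B j *m D = 0) ->
     0 <= \sum_j dl1norm (Ws j) (E j)) ->
  exists (L1 : forall j, 'M[R]_(r j, l)) (L2 : 'M[R]_l),
    (forall j, subdiff (@l1norm R (n j) l) (Ws j) ((A j)^T *m L1 j)) /\
    \sum_j (B j)^T *m L1 j + Zs *m L2 = 0.
Proof.
move=> dl1norm_ge0.
have [y /set_mem y_box y_min] := compact_EVT_min (ex_intro _ 0 (@box0 R N)) (@compact_box R N)
  (continuous_subspaceT continuous_defect).
have [x x_box defect_xy] := defect_descent dl1norm_ge0 y.
apply: (multipliers_of_defect0 y_box); apply/le_anti; rewrite defect_ge0 andbT.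
apply: le_trans defect_xy; apply: quadratic_min_le defectC defect_comb _ => t t01.
by apply: y_min; apply/mem_set; apply: box_comb => //; case/andP: t01 => /ltW -> ->.
Qed.

End Multipliers.

Theorem lemma1 (R : realType) (J m l : nat) (n r : 'I_J -> nat)
  (X : forall j, 'M[R]_(n j, m))
  (P : forall j, 'M[R]_(n j, r j)) (Q : forall j, 'M[R]_(m, r j))
  (s : forall j, 'rV[R]_(r j))
  (hP : forall j, (P j)^T *m P j = 1%:M)
  (hQ : forall j, (Q j)^T *m Q j = 1%:M)
  (hs : forall j (i : 'I_(r j)), 0 < s j 0 i)
  (hX : forall j, X j = P j *m diag_mx (s j) *m (Q j)^T)
  (hl : (0 < l)%N)
  (Ws : forall j, 'M[R]_(n j, l)) (Zs : 'M[R]_(m, l))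
  (hmin : local_minimizer (fun j => (P j)^T)
            (fun j => - (invmx (diag_mx (s j)) *m (Q j)^T)) Ws Zs) :
  exists (L1 : forall j, 'M[R]_(r j, l)) (L2 : 'M[R]_l),
    (forall j, subdiff (@l1norm R (n j) l) (Ws j) (((P j)^T)^T *m L1 j)) /\
    \sum_(j < J) (- (invmx (diag_mx (s j)) *m (Q j)^T))^T *m L1 j + Zs *m L2 = 0 /\
    (forall j, (P j)^T *m Ws j + (- (invmx (diag_mx (s j)) *m (Q j)^T)) *m Zs = 0) /\
    Zs^T *m Zs = 1%:M.
Proof.
have A_coisometry j : (P j)^T *m ((P j)^T)^T = 1%:M by rewrite trmxK hP.
have [[feasW Zs_orthonormal] _] := hmin.
have [L1 [L2 [subdiffL sumL]]] := multipliers_of_dl1norm_ge0 A_coisometry Zs_orthonormal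
  (fun D E => local_minimizer_dl1norm_ge0 A_coisometry hmin).
by exists L1, L2.
Qed.
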